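(* Every linear BCK-algebra $\mathcal A$ of order $n$ satisfies $\operatorname{id}(\mathcal A)\ge\frac{n^2+3n-2}{2n^2}$, and for every $n\ge3$ equality holds for $\mathcal C_n$: $\operatorname{id}(\mathcal C_n)=\frac{n^2+3n-2}{2n^2}$. In particular every finite linear BCK-algebra $\mathcal A$ satisfies $\frac12<\operatorname{id}(\mathcal A)\le1$.
   Context: A BCK-algebra is a set $A$ with a binary operation $\cdot$ and a constant $0$ such that for all $x,y,z\in A$: (BCK1) $((x\cdot y)\cdot(x\cdot z))\cdot(z\cdot y)=0$; (BCK2) $(x\cdot(x\cdot y))\cdot y=0$; (BCK3) $x\cdot x=0$; (BCK4) $0\cdot x=0$; (BCK5) $x\cdot y=0$ and $y\cdot x=0$ imply $x=y$. The order $x\le y$ iff $x\cdot y=0$; the algebra is linear if this order is a chain. For finite $\mathcal A$, $\operatorname{id}(\mathcal A)=|\{(x,y)\in A^2:x\cdot(y\cdot x)=x\}|/|A|^2$. For $n\ge2$, $\mathcal C_n$ is the BCK-algebra with carrier $\{0,1,\dots,n-1\}$ and $x\cdot y=\max\{x-y,0\}$. *)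

From mathcomp Require Import all_boot all_order all_algebra.
Set Implicit Arguments. Unset Strict Implicit. Unset Printing Implicit Defensive.
Import GRing.Theory Num.Theory.

Definition is_BCK (T : eqType) (op : T -> T -> T) (z : T) : Prop :=
  [/\ (forall x y w, op (op (op x y) (op x w)) (op w y) = z),
      (forall x y, op (op x (op x y)) y = z),
      (forall x, op x x = z),
      (forall x, op z x = z)
    & (forall x y, op x y = z -> op y x = z -> x = y)].

(* linear: the order x <= y iff x*y = 0 is a chain *)
Definition BCK_linear (T : eqType) (op : T -> T -> T) (z : T) : Prop :=
  forall x y, op x y = z \/ op y x = z.

Definition id_deg (T : finType) (op : T -> T -> T) : rat :=
  (#|[set p : T * T | op p.1 (op p.2 p.1) == p.1]|%:R / (#|T| ^ 2)%:R)%R.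

(* C_n : carrier {0,...,n-1}, x*y = max(x-y,0) (truncated nat subtraction) *)
Definition Cop (n : nat) (x y : 'I_n) : 'I_n :=
  Ordinal (leq_ltn_trans (leq_subr y x) (ltn_ord x)).

From mathcomp Require Import all_boot all_order all_algebra.
From mathcomp Require Import zify ring lra.

Set Implicit Arguments.
Unset Strict Implicit.

(* In a BCK-algebra x * 0 = x and 0 * y = 0, so x * (y * x) = x holds whenever
   y <= x (then y * x = 0) and whenever x = 0.  In a linear algebra of order n
   the pairs with y <= x number (n^2 + n)/2 (a total antisymmetric relation),
   and the pairs (0, y) with y <> 0 add n - 1 more, giving the bound.  In C_n
   the identity x - (y - x) = x forces y <= x or x = 0, so the bound is exact. *)

Lemma card_total_antisym (T : finType) (r : rel T) :
  reflexive r -> antisymmetric r -> total r ->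
  2 * #|[set p : T * T | r p.1 p.2]| = #|T| ^ 2 + #|T|.
Proof.
move=> r_refl r_anti r_total.
set A := [set p : T * T | r p.1 p.2].
set A' := [set p : T * T | r p.2 p.1].
have cardA' : #|A'| = #|A|.
  have -> : A' = (fun p : T * T => (p.2, p.1)) @^-1: A.
    by apply/setP => -[x y]; rewrite !inE.
  by apply: card_preimset => -[a b] [c d] [-> ->].
have AUA' : A :|: A' = setT.
  by apply/setP => -[x y]; rewrite !inE /= r_total.
have AIA' : A :&: A' = [set (x, x) | x in T].
  apply/setP => -[x y]; rewrite !inE /=; apply/idP/imsetP.
    by move=> /r_anti <-; exists x.
  by case=> w _ [-> ->]; rewrite r_refl.
have := cardsUI A A'.
rewrite AUA' AIA' cardsT card_prod card_imset; last by move=> a b [].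
by rewrite cardA' -mulnn mul2n -addnn => ->.
Qed.

Section LinearBCK.
Variables (T : finType) (op : T -> T -> T) (z : T).
Hypotheses (op_BCK : is_BCK op z) (op_linear : BCK_linear op z).

Definition id_pairs := [set p : T * T | op p.1 (op p.2 p.1) == p.1].
Definition lower_pairs := [set p : T * T | op p.2 p.1 == z].
Definition zero_pairs := [set (z, y) | y in [set~ z]].

Lemma BCK_opx0 x : op x z = x.
Proof.
case: op_BCK => _ op_absorb op_xx op_0x op_antisym.
apply: (op_antisym); first by have := op_absorb x x; rewrite op_xx.
by apply: op_antisym; [exact: op_absorb | exact: op_0x].
Qed.

Lemma card_lower_pairs : 2 * #|lower_pairs| = #|T| ^ 2 + #|T|.
Proof.
case: op_BCK => _ _ op_xx _ op_antisym.
apply: (@card_total_antisym _ (fun x y => op y x == z)).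
- by move=> x; rewrite op_xx.
- by move=> x y /andP [/eqP yx /eqP xy]; exact: op_antisym.
- by move=> x y; case: (op_linear x y) => ->; rewrite eqxx ?orbT.
Qed.

Lemma card_zero_pairs : #|zero_pairs| = #|T|.-1.
Proof. by rewrite card_imset ?cardsC1 // => a b []. Qed.

Lemma lower_zero_pairs_disjoint : [disjoint lower_pairs & zero_pairs].
Proof.
rewrite -setI_eq0; apply/eqP/setP => -[x y]; rewrite !inE /=.
apply/negbTE; apply/andP => -[/eqP yx /imsetP [w]].
by rewrite !inE => /eqP wz [xz yw]; move: yx; rewrite xz BCK_opx0 yw.
Qed.

Lemma lower_zero_pairs_sub : lower_pairs :|: zero_pairs \subset id_pairs.
Proof.
case: op_BCK => _ _ _ op_0x _.
apply/subsetP => -[x y]; rewrite !inE /= => /orP [/eqP -> | /imsetP [w _ [-> _]]].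
  by rewrite BCK_opx0.
by rewrite op_0x.
Qed.

Lemma card_lower_zero_pairs :
  2 * #|lower_pairs :|: zero_pairs| = #|T| ^ 2 + 3 * #|T| - 2.
Proof.
have T_gt0 : 0 < #|T| by apply/card_gt0P; exists z.
have := cardsUI lower_pairs zero_pairs.
have /eqP -> : lower_pairs :&: zero_pairs == set0.
  by rewrite setI_eq0 lower_zero_pairs_disjoint.
rewrite cards0 addn0 => ->.
by have := card_lower_pairs; rewrite card_zero_pairs; lia.
Qed.

Lemma card_id_pairs_ge : #|T| ^ 2 + 3 * #|T| - 2 <= 2 * #|id_pairs|.
Proof.
by rewrite -card_lower_zero_pairs leq_mul2l subset_leq_card ?lower_zero_pairs_sub ?orbT.
Qed.

Lemma card_id_pairs_eq :
    (forall x y, op x (op y x) = x -> op y x = z \/ x = z) ->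
  2 * #|id_pairs| = #|T| ^ 2 + 3 * #|T| - 2.
Proof.
move=> id_cases; rewrite -card_lower_zero_pairs.
suff -> : id_pairs = lower_pairs :|: zero_pairs by [].
apply/eqP; rewrite eqEsubset lower_zero_pairs_sub andbT.
apply/subsetP => -[x y]; rewrite !inE /= => /eqP /id_cases [-> | xz].
  by rewrite eqxx.
have [yz | yNz] := eqVneq y z.
  by case: op_BCK => _ _ op_xx _ _; rewrite yz xz op_xx eqxx.
by rewrite xz; apply/orP; right; apply/imsetP; exists y; rewrite ?inE.
Qed.

End LinearBCK.

Lemma Cop_BCK n : is_BCK (@Cop n.+1) ord0.
Proof.
split.
- by move=> x y w; apply: val_inj => /=; lia.
- by move=> x y; apply: val_inj => /=; lia.
- by move=> x; apply: val_inj => /=; lia.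
- by move=> x; apply: val_inj => /=; lia.
- move=> x y /(congr1 val) /= xy /(congr1 val) /= yx; apply: val_inj => /=; lia.
Qed.

Lemma Cop_linear n : BCK_linear (@Cop n.+1) ord0.
Proof.
by move=> x y; case: (leqP x y) => h; [left | right]; apply: val_inj => /=; lia.
Qed.

Lemma Cop_id_cases n (x y : 'I_n.+1) :
  Cop x (Cop y x) = x -> Cop y x = ord0 \/ x = ord0.
Proof.
move=> /(congr1 val) /= h.
by case: (leqP y x) => h2; [left | right]; apply: val_inj => /=; lia.
Qed.

Import Order.TTheory GRing.Theory Num.Theory.
Local Open Scope ring_scope.

Lemma natr_div_double (a d : nat) :
  (2 * a)%N%:R / (2 * d)%N%:R = a%:R / d%:R :> rat.
Proof.
have [-> | d_gt0] := posnP d; first by rewrite muln0 !invr0 !mulr0.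
by rewrite !natrM; field; rewrite pnatr_eq0 -lt0n d_gt0.
Qed.

Lemma id_deg_le1 (T : finType) (op : T -> T -> T) : id_deg op <= 1.
Proof.
rewrite /id_deg; have [-> | n_gt0] := posnP (#|T| ^ 2)%N.
  by rewrite invr0 mulr0.
rewrite ler_pdivrMr ?ltr0n // mul1r ler_nat.
by apply: leq_trans (max_card _) _; rewrite card_prod mulnn.
Qed.

Lemma half_lt_id_bound (n : nat) : (0 < n)%N ->
  1 / 2 < (n ^ 2 + 3 * n - 2)%N%:R / (2 * n ^ 2)%N%:R :> rat.
Proof.
move=> n_gt0.
have n2_lt : (n ^ 2 < n ^ 2 + 3 * n - 2)%N by lia.
have n2_gt0 : (0 : rat) < (n ^ 2)%N%:R by rewrite ltr0n expn_gt0 n_gt0.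
rewrite ltr_pdivlMr ?ltr0n ?muln_gt0 ?expn_gt0 ?n_gt0 // natrM.
by move: n2_lt; rewrite -(ltr_nat rat) => n2_lt; lra.
Qed.

Lemma id_deg_linear_BCK_ge (T : finType) (op : T -> T -> T) (z : T) :
    is_BCK op z -> BCK_linear op z ->
  (#|T| ^ 2 + 3 * #|T| - 2)%N%:R / (2 * #|T| ^ 2)%N%:R <= id_deg op.
Proof.
move=> op_BCK op_linear.
rewrite /id_deg -/(id_pairs op) -[X in _ <= X]natr_div_double.
by apply: ler_wpM2r; rewrite ?invr_ge0 ?ler0n // ler_nat (card_id_pairs_ge op_BCK op_linear).
Qed.

Lemma id_deg_Cop n : (0 < n)%N ->
  id_deg (@Cop n) = (n ^ 2 + 3 * n - 2)%N%:R / (2 * n ^ 2)%N%:R.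
Proof.
case: n => [// | n] _.
have := card_id_pairs_eq (@Cop_BCK n) (@Cop_linear n) (@Cop_id_cases n).
by rewrite card_ord => <-; rewrite natr_div_double /id_deg -/(id_pairs _) card_ord.
Qed.

Theorem mainTheorem19 :
  (forall (T : finType) (op : T -> T -> T) (z : T),
      is_BCK op z -> BCK_linear op z ->
      ((#|T| ^ 2 + 3 * #|T| - 2)%N%:R / (2 * #|T| ^ 2)%N%:R : rat) <= id_deg op)
  /\ (forall n : nat, (3 <= n)%N ->
      id_deg (@Cop n) = ((n ^ 2 + 3 * n - 2)%N%:R / (2 * n ^ 2)%N%:R : rat))
  /\ (forall (T : finType) (op : T -> T -> T) (z : T),
      is_BCK op z -> BCK_linear op z ->
      1 / 2 < id_deg op /\ id_deg op <= 1).
Proof.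
split; first exact: id_deg_linear_BCK_ge.
split; first by move=> n n_ge3; apply: id_deg_Cop; apply: leq_trans n_ge3.
move=> T op z op_BCK op_linear; split; last exact: id_deg_le1.
apply: lt_le_trans (id_deg_linear_BCK_ge op_BCK op_linear).
by apply: half_lt_id_bound; apply/card_gt0P; exists z.
Qed.
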